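(* Let $\mathcal{X}$ be a set and let $k:\mathcal{X}\times\mathcal{X}\to\mathbb{R}_{\ge 0}$ be a symmetric positive semidefinite function (i.e. for every finite subset $\{x_1,\dots,x_m\}\subseteq\mathcal{X}$ the matrix $(k(x_i,x_j))_{i,j}$ is positive semidefinite) whose image $\{k(x,y):x,y\in\mathcal{X}\}$ has exactly two elements. Then $k$ is a strong kernel.
   Context: A strong kernel on a set $\mathcal{X}$ is a symmetric function $k:\mathcal{X}\times\mathcal{X}\to\mathbb{R}_{\ge 0}$ such that $k(x,y)\ge\min\{k(x,z),k(z,y)\}$ for all $x,y,z\in\mathcal{X}$. *)

From Stdlib Require Import Reals.
Open Scope R_scope.

Fixpoint rsum (n : nat) (f : nat -> R) : R :=
  match n with
  | O => 0
  | S n' => rsum n' f + f n'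
  end.

Definition symmetric_kernel {X : Type} (k : X -> X -> R) : Prop :=
  forall x y, k x y = k y x.

Definition nonneg_kernel {X : Type} (k : X -> X -> R) : Prop :=
  forall x y, 0 <= k x y.

(* For every finite subset {x_0,...,x_{m-1}} (distinct points) of X, the Gram
   matrix (k(x_i,x_j))_{i,j} is positive semidefinite, i.e. c^T K c >= 0
   for every real vector c. *)
Definition psd_kernel {X : Type} (k : X -> X -> R) : Prop :=
  forall (m : nat) (x : nat -> X),
    (forall i j, (i < m)%nat -> (j < m)%nat -> x i = x j -> i = j) ->
    forall c : nat -> R,
      0 <= rsum m (fun i => rsum m (fun j => c i * c j * k (x i) (x j))).

Definition image_has_two_elements {X : Type} (k : X -> X -> R) : Prop :=
  exists a b : R, a <> b /\
    (forall x y, k x y = a \/ k x y = b) /\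
    (exists x y, k x y = a) /\ (exists x y, k x y = b).

Definition strong_kernel {X : Type} (k : X -> X -> R) : Prop :=
  symmetric_kernel k /\ nonneg_kernel k /\
  forall x y z, Rmin (k x z) (k z y) <= k x y.

(* Suppose [k x y < min (k x z) (k z y)]. Since [k] takes only two values,
   [k x y] is the smaller value [lo] and [k x z = k z y] is the larger value
   [hi], which bounds every diagonal entry. If [x = y], the Gram quadratic
   form of [{x, z}] at [(1, -1)] is at most [lo + hi - 2 hi < 0]; otherwise
   the Gram quadratic form of [{x, y, z}] at [(1, 1, -2)] is at most
   [6 hi + 2 lo - 8 hi < 0]. Either way positive semidefiniteness fails. *)
From Stdlib Require Import Reals.
From Stdlib Require Import Lra Lia Classical.
Open Scope R_scope.

Section PsdKernel.

Context {X : Type} {k : X -> X -> R}.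
Hypotheses (k_sym : symmetric_kernel k) (k_psd : psd_kernel k).

Lemma psd_kernel_pair {x z : X} :
  x <> z -> 2 * k x z <= k x x + k z z.
Proof.
  intros Exz.
  pose (p := fun i : nat => match i with 0%nat => x | _ => z end).
  pose (c := fun i : nat => match i with 0%nat => 1 | _ => -1 end).
  assert (p_inj : forall i j, (i < 2)%nat -> (j < 2)%nat -> p i = p j -> i = j).
  { intros [|[|i]] [|[|j]] Hi Hj E; simpl in E; try lia; congruence. }
  pose proof (k_psd 2%nat p p_inj c) as Q; simpl in Q.
  rewrite (k_sym z x) in Q; lra.
Qed.

Lemma psd_kernel_triple {x y z : X} :
  x <> y -> x <> z -> y <> z ->
  4 * (k x z + k y z) <= k x x + k y y + 4 * k z z + 2 * k x y.
Proof.
  intros Exy Exz Eyz.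
  pose (p := fun i : nat => match i with 0%nat => x | 1%nat => y | _ => z end).
  pose (c := fun i : nat => match i with 0%nat => 1 | 1%nat => 1 | _ => -2 end).
  assert (p_inj : forall i j, (i < 3)%nat -> (j < 3)%nat -> p i = p j -> i = j).
  { intros [|[|[|i]]] [|[|[|j]]] Hi Hj E; simpl in E; try lia; congruence. }
  pose proof (k_psd 3%nat p p_inj c) as Q; simpl in Q.
  rewrite (k_sym z x), (k_sym z y), (k_sym y x) in Q; lra.
Qed.

End PsdKernel.

Lemma lt_two_valued {a b u v t : R} :
  (u = a \/ u = b) -> (v = a \/ v = b) -> (t = a \/ t = b) ->
  u < v -> t <= v.
Proof. intros [Hu | Hu] [Hv | Hv] [Ht | Ht] Huv; lra. Qed.

Theorem mainTheorem5 (X : Type) (k : X -> X -> R) :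
  symmetric_kernel k -> nonneg_kernel k -> psd_kernel k ->
  image_has_two_elements k -> strong_kernel k.
Proof.
  intros k_sym k_nonneg k_psd [a [b [_ [k_two _]]]].
  split; [exact k_sym | split; [exact k_nonneg |]].
  intros x y z.
  destruct (Rle_dec (Rmin (k x z) (k z y)) (k x y)) as [|Hlt]; [assumption |].
  exfalso; apply Rnot_le_lt in Hlt.
  assert (lt_xz : k x y < k x z) by (eapply Rlt_le_trans; [exact Hlt | apply Rmin_l]).
  assert (lt_zy : k x y < k z y) by (eapply Rlt_le_trans; [exact Hlt | apply Rmin_r]).
  assert (le_kxz : forall u v, k u v <= k x z)
    by (intros u v; exact (lt_two_valued (k_two x y) (k_two x z) (k_two u v) lt_xz)).
  assert (le_kzy : forall u v, k u v <= k z y)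
    by (intros u v; exact (lt_two_valued (k_two x y) (k_two z y) (k_two u v) lt_zy)).
  assert (Ezx : x <> z) by (intros <-; lra).
  destruct (classic (x = y)) as [<- | Exy].
  - pose proof (psd_kernel_pair k_sym k_psd Ezx).
    pose proof (le_kxz z z); lra.
  - assert (Eyz : y <> z) by (intros <-; lra).
    pose proof (psd_kernel_triple k_sym k_psd Exy Ezx Eyz).
    rewrite (k_sym y z) in *.
    pose proof (le_kxz x x); pose proof (le_kxz y y); pose proof (le_kxz z z).
    pose proof (le_kxz z y); pose proof (le_kzy x z); lra.
Qed.
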